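(* Fix an iteration $t\ge 1$ of importance-sampling-based BoostTransformer, with current aggregated predictor $f_{t-1}$, and let $f^*$ be a minimizer of the risk $\mathcal{R}$. For a probability distribution $P_t=(P_t^1,\dots,P_t^n)$ on $\{1,\dots,n\}$ with all $P_t^i>0$, let the multiset $\mathcal{I}^t=\{i_1,\dots,i_m\}$ ($m\ge 1$) be drawn by sampling $m$ indices independently according to $P_t$, define the importance-weighted functional gradient estimate $$\bar g_t^{\mathcal{I}^t}=\frac{1}{m}\sum_{k=1}^{m}\frac{1}{n\,P_t^{i_k}}\,g_t^{i_k},$$ the update $f_t=f_{t-1}+\alpha_t\,\bar g_t^{\mathcal{I}^t}$ with a fixed step $\alpha_t\in\mathbb{R}$ (not depending on $P_t$), and the expected training progress $$\mathbb{E}_{P_t}\big[\Delta^{(t)}\big]=\|f_{t-1}-f^*\|^2-\mathbb{E}_{P_t}\big[\|f_t-f^*\|^2\,\big|\,\mathcal{F}^{t-1}\big].$$ Then the distribution $$P_t^i=\frac{\|w(x_i,z_i)\|}{\sum_{j=1}^{n}\|w(x_j,z_j)\|},\qquad i=1,\dots,n,$$ maximizes $\mathbb{E}_{P_t}[\Delta^{(t)}]$ over all such distributions $P_t$; that is, the optimal probability of selecting sample $i$ is proportional to the norm of its boosting weight vector.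
   Context: Multiclass boosting setting: training set $\mathcal{D}=\{(x_1,z_1),\dots,(x_n,z_n)\}$ with labels $z_i\in\{1,\dots,M\}$; predictors $f:\mathcal{X}\to\mathbb{R}^M$ with components $f_k$. The loss is $L(z,f(x))=\sum_{j\ne z}e^{\frac12[f_z(x)-f_j(x)]}$ and the risk is $\mathcal{R}[f]=\frac{1}{n}\sum_{i=1}^n L(z_i,f(x_i))$. The boosting weight vector $w(x,z)\in\mathbb{R}^M$ at the current predictor $f=f_{t-1}$ is $w_k(x,z)=-e^{-\frac12[f_z(x)-f_k(x)]}$ for $k\ne z$ and $w_z(x,z)=\sum_{j\ne z}e^{-\frac12[f_z(x)-f_j(x)]}$. Predictors and functional gradients are regarded as elements of a real inner product space with norm $\|\cdot\|$. For each sample $i$, $g_t^i$ denotes the functional (directional) gradient of the $i$-th loss term $L(z_i,\cdot)$ at $f_{t-1}$, and the full functional gradient is $g_t=\frac1n\sum_{i=1}^n g_t^i$; as in the paper, the per-sample gradient is identified with the boosting weight up to a common positive scale, so $\|g_t^i\|=\beta\,\|w(x_i,z_i)\|$ for a fixed $\beta>0$. The importance-weighted estimate is unbiased: $\mathbb{E}_{P_t}[\bar g_t^{\mathcal{I}^t}]=g_t$. $\mathcal{F}^{t-1}$ denotes the history of the algorithm up to iteration $t-1$ (so $f_{t-1}$, the $w(x_i,z_i)$ and the $g_t^i$ are fixed given $\mathcal{F}^{t-1}$). *)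

From HB Require Import structures.
From mathcomp Require Import all_boot all_order all_algebra.
From mathcomp Require Import all_classical all_reals.
From mathcomp Require Import sequences exp.
Set Implicit Arguments. Unset Strict Implicit. Unset Printing Implicit Defensive.
Import Order.TTheory GRing.Theory Num.Theory.
Local Open Scope ring_scope.

Section Boost.
Variable R : realType.

(* A predictor evaluated at a point x is a score vector fx : 'I_M -> R. *)

Definition loss (M : nat) (z : 'I_M) (fx : 'I_M -> R) : R :=
  \sum_(j < M | j != z) expR ((fx z - fx j) / 2).

Definition risk (X : Type) (n M : nat) (xs : 'I_n -> X) (zs : 'I_n -> 'I_M)
    (f : X -> 'I_M -> R) : R :=
  n%:R^-1 * \sum_(i < n) loss (zs i) (f (xs i)).

Definition bweight (M : nat) (fx : 'I_M -> R) (z : 'I_M) (k : 'I_M) : R :=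
  if k == z then \sum_(j < M | j != z) expR (- ((fx z - fx j) / 2))
  else - expR (- ((fx z - fx k) / 2)).

Definition enorm (M : nat) (v : 'I_M -> R) : R :=
  Num.sqrt (\sum_(k < M) v k ^+ 2).

Definition is_inner_product (V : lmodType R) (ip : V -> V -> R) : Prop :=
  [/\ (forall u v, ip u v = ip v u),
      (forall (a : R) u v w, ip (a *: u + v) w = a * ip u w + ip v w),
      (forall v, 0 <= ip v v) &
      (forall v, ip v v = 0 -> v = 0)].

Definition ipnorm (V : lmodType R) (ip : V -> V -> R) (v : V) : R :=
  Num.sqrt (ip v v).

Definition pos_distr (n : nat) (P : 'I_n -> R) : Prop :=
  (forall i, 0 < P i) /\ \sum_(i < n) P i = 1.

(* Expectation over m indices drawn i.i.d. from P: a sample is a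
   function s : 'I_m -> 'I_n (s k = i_k), of probability \prod_k P (s k). *)
Definition iid_expect (n m : nat) (P : 'I_n -> R)
    (F : {ffun 'I_m -> 'I_n} -> R) : R :=
  \sum_(s : {ffun 'I_m -> 'I_n}) (\prod_(k < m) P (s k)) * F s.

Definition gbar (V : lmodType R) (n m : nat) (P : 'I_n -> R) (g : 'I_n -> V)
    (s : {ffun 'I_m -> 'I_n}) : V :=
  m%:R^-1 *: \sum_(k < m) ((n%:R * P (s k))^-1 *: g (s k)).

Definition exp_progress (V : lmodType R) (ip : V -> V -> R) (n m : nat)
    (P : 'I_n -> R) (g : 'I_n -> V) (alpha : R) (fprev fstar : V) : R :=
  ipnorm ip (fprev - fstar) ^+ 2 -
  @iid_expect n m P (fun s => ipnorm ip (fprev + alpha *: @gbar V n m P g s - fstar) ^+ 2).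

End Boost.

From HB Require Import structures.
From mathcomp Require Import all_boot all_order all_algebra.
From mathcomp Require Import all_classical all_reals.
From mathcomp Require Import sequences exp.
From mathcomp Require Import ring lra.
Import Order.TTheory GRing.Theory Num.Theory.
Set Implicit Arguments. Unset Strict Implicit. Unset Printing Implicit Defensive.
Local Open Scope ring_scope.

(* With u_i := g_i / (n P_i) the estimate is the mean of m i.i.d. copies of u,
   whose mean (1/n) sum_i g_i does not depend on P.  Expanding the square, the
   only P-dependent part of the expected progress is
   -(alpha^2 / (m n^2)) sum_i ||g_i||^2 / P_i, and by Cauchy-Schwarz
   sum_i a_i^2 / P_i >= (sum_i a_i)^2 with equality iff P is proportional to a. *)

Lemma sum_indicator (R : pzRingType) (I : finType) (F : I -> R) i :
  \sum_x (x == i)%:R * F x = F i.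
Proof. by rewrite (bigD1 i) //= eqxx mul1r big1 ?addr0 // => x /negPf->; rewrite mul0r. Qed.

Section IidExpectation.
Variables (R : realType) (n m : nat) (P : 'I_n -> R).

Lemma eq_iid_expect (F1 F2 : {ffun 'I_m -> 'I_n} -> R) :
  F1 =1 F2 -> iid_expect P F1 = iid_expect P F2.
Proof. by move=> eqF; apply: eq_bigr => s _; rewrite eqF. Qed.

Lemma iid_expectD (F1 F2 : {ffun 'I_m -> 'I_n} -> R) :
  iid_expect P (fun s => F1 s + F2 s) = iid_expect P F1 + iid_expect P F2.
Proof. by rewrite /iid_expect -big_split; apply: eq_bigr => s _; rewrite mulrDr. Qed.

Lemma iid_expectMl (c : R) (F : {ffun 'I_m -> 'I_n} -> R) :
  iid_expect P (fun s => c * F s) = c * iid_expect P F.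
Proof. by rewrite /iid_expect mulr_sumr; apply: eq_bigr => s _; rewrite mulrCA. Qed.

Lemma iid_expect_sum (I : Type) (r : seq I) (F : I -> {ffun 'I_m -> 'I_n} -> R) :
  iid_expect P (fun s => \sum_(i <- r) F i s) = \sum_(i <- r) iid_expect P (F i).
Proof. by rewrite /iid_expect exchange_big; apply: eq_bigr => s _; rewrite mulr_sumr. Qed.

Lemma iid_expect_prod (G : 'I_m -> 'I_n -> R) :
  iid_expect P (fun s => \prod_k G k (s k)) = \prod_(k < m) \sum_(j < n) P j * G k j.
Proof.
by rewrite /iid_expect bigA_distr_bigA; apply: eq_bigr => s _; rewrite -big_split.
Qed.

Hypothesis P_sum1 : \sum_i P i = 1.

Let sum_P_mul1 : \sum_j P j * 1 = 1.
Proof. by under eq_bigr do rewrite mulr1. Qed.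

Lemma iid_expect_cst (c : R) : iid_expect P (fun _ : {ffun 'I_m -> 'I_n} => c) = c.
Proof.
rewrite (@eq_iid_expect _ (fun s => c * \prod_(k < m) (fun _ _ => 1) k (s k))).
  by rewrite iid_expectMl (iid_expect_prod (fun _ _ => 1)) big1 ?mulr1.
by move=> s; rewrite big1 ?mulr1.
Qed.

Lemma iid_expect_coord (k : 'I_m) (F : 'I_n -> R) :
  iid_expect P (fun s => F (s k)) = \sum_i P i * F i.
Proof.
pose G k' j := if k' == k then F j else 1.
rewrite (@eq_iid_expect _ (fun s => \prod_k' G k' (s k'))).
  rewrite iid_expect_prod (bigD1 k) //= [X in _ * X]big1 ?mulr1 => [|k' /negPf nk].
    by apply: eq_bigr => j _; rewrite /G eqxx.
  by under eq_bigr do rewrite /G nk; exact: sum_P_mul1.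
by move=> s; rewrite (bigD1 k) //= /G eqxx big1 ?mulr1 // => k' /negPf->.
Qed.

Lemma iid_expect_coord2 (k l : 'I_m) (F1 F2 : 'I_n -> R) : k != l ->
  iid_expect P (fun s => F1 (s k) * F2 (s l)) =
  (\sum_i P i * F1 i) * (\sum_i P i * F2 i).
Proof.
move=> kl; pose G k' j := if k' == k then F1 j else if k' == l then F2 j else 1.
have split_kl (T : 'I_m -> R) : \prod_k' T k' =
    T k * (T l * \prod_(k' | (k' != k) && (k' != l)) T k').
  by rewrite (bigD1 k) // (bigD1 l) 1?eq_sym //=; under eq_bigl do rewrite andbC.
have G_out k' j : (k' != k) && (k' != l) -> G k' j = 1.
  by case/andP=> /negPf nk /negPf nl; rewrite /G nk nl.
have [Gk Gl] : G k =1 F1 /\ G l =1 F2.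
  by split=> j; rewrite /G ?eqxx // eq_sym (negPf kl).
rewrite (@eq_iid_expect _ (fun s => \prod_k' G k' (s k'))); last first.
  by move=> s; rewrite split_kl Gk Gl big1 ?mulr1 // => k' /G_out->.
rewrite iid_expect_prod split_kl [X in _ * (_ * X)]big1 ?mulr1 => [|k' /G_out Gk'].
  by congr (_ * _); apply: eq_bigr => j _; rewrite ?Gk ?Gl.
by under eq_bigr do rewrite Gk'; exact: sum_P_mul1.
Qed.

Lemma iid_expect_pair (k l : 'I_m) (H : 'I_n -> 'I_n -> R) : k != l ->
  iid_expect P (fun s => H (s k) (s l)) = \sum_i \sum_j P i * P j * H i j.
Proof.
move=> kl.
rewrite (@eq_iid_expect _ (fun s => \sum_i \sum_j
    H i j * ((s k == i)%:R * (s l == j)%:R))); last first.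
  move=> s; rewrite -(sum_indicator (fun i => H i (s l)) (s k)).
  apply: eq_bigr => i _; rewrite -(sum_indicator (H i) (s l)) mulr_sumr.
  by apply: eq_bigr => j _; rewrite (eq_sym i) (eq_sym j); ring.
rewrite iid_expect_sum; apply: eq_bigr => i _; rewrite iid_expect_sum.
apply: eq_bigr => j _; rewrite iid_expectMl.
rewrite (iid_expect_coord2 (fun x => (x == i)%:R) (fun x => (x == j)%:R) kl).
under eq_bigr do rewrite mulrC; rewrite sum_indicator.
under eq_bigr do rewrite mulrC; rewrite sum_indicator; ring.
Qed.

End IidExpectation.

Section InnerProduct.
Variables (R : realType) (V : lmodType R) (ip : V -> V -> R).
Hypothesis ip_inner : is_inner_product ip.

Lemma ipC u v : ip u v = ip v u. Proof. by case: ip_inner. Qed.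

Lemma ip_ge0 v : 0 <= ip v v. Proof. by case: ip_inner. Qed.

Lemma ipnorm_sqr v : ipnorm ip v ^+ 2 = ip v v.
Proof. exact/sqr_sqrtr/ip_ge0. Qed.

Lemma ip0l w : ip 0 w = 0.
Proof.
by case: ip_inner => _ ipL _ _; have := ipL (-1) w w w; rewrite scaleN1r addNr mulN1r addNr.
Qed.

Lemma ipDl u v w : ip (u + v) w = ip u w + ip v w.
Proof. by case: ip_inner => _ ipL _ _; have := ipL 1 u v w; rewrite scale1r mul1r. Qed.

Lemma ipZl a u w : ip (a *: u) w = a * ip u w.
Proof. by case: ip_inner => _ ipL _ _; have := ipL a u 0 w; rewrite !addr0 ip0l addr0. Qed.

Lemma ipDr u v w : ip w (u + v) = ip w u + ip w v.
Proof. by rewrite ipC ipDl ipC [ip v w]ipC. Qed.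

Lemma ipZr a u w : ip w (a *: u) = a * ip w u.
Proof. by rewrite ipC ipZl ipC. Qed.

Lemma ip_suml I (r : seq I) (F : I -> V) w :
  ip (\sum_(i <- r) F i) w = \sum_(i <- r) ip (F i) w.
Proof. exact: (big_morph (ip^~ w) (fun u v => ipDl u v w) (ip0l w)). Qed.

Lemma ip_sumr I (r : seq I) (F : I -> V) w :
  ip w (\sum_(i <- r) F i) = \sum_(i <- r) ip w (F i).
Proof. by rewrite ipC ip_suml; apply: eq_bigr => i _; rewrite ipC. Qed.

Lemma ip_sqrDZ d c v :
  ip (d + c *: v) (d + c *: v) = ip d d + 2 * c * ip v d + c ^+ 2 * ip v v.
Proof. by rewrite !ipDl !ipDr !ipZl !ipZr [ip d v]ipC; ring. Qed.

(* Only the m diagonal terms involve the second moment of u; the m (m - 1)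
   cross terms, over independent coordinates, factor through its mean. *)
Lemma iid_expect_ip_sqr n m (P : 'I_n -> R) (u : 'I_n -> V) d c :
  \sum_i P i = 1 ->
  iid_expect P (fun s : {ffun 'I_m -> 'I_n} =>
     ip (d + c *: \sum_k u (s k)) (d + c *: \sum_k u (s k))) =
  ip d d + 2 * c * m%:R * ip (\sum_i P i *: u i) d +
  c ^+ 2 * m%:R * ((m%:R - 1) * ip (\sum_i P i *: u i) (\sum_i P i *: u i) +
                   \sum_i P i * ip (u i) (u i)).
Proof.
move=> P_sum1; set W := \sum_i P i *: u i; set A := \sum_i P i * ip (u i) (u i).
have mean k : iid_expect P (fun s : {ffun 'I_m -> 'I_n} => ip (u (s k)) d) = ip W d.
  rewrite (iid_expect_coord P_sum1 k (fun j => ip (u j) d)) /W ip_suml.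
  by apply: eq_bigr => i _; rewrite ipZl.
have cross k l : iid_expect P (fun s : {ffun 'I_m -> 'I_n} => ip (u (s k)) (u (s l))) =
    ip W W + (l == k)%:R * (A - ip W W).
  have [<-|kl] := eqVneq k l.
    by rewrite mul1r addrC subrK (iid_expect_coord P_sum1 k (fun j => ip (u j) (u j))).
  rewrite mul0r addr0 (iid_expect_pair P_sum1 (fun i j => ip (u i) (u j)) kl) /W ip_suml.
  apply: eq_bigr => i _; rewrite ipZl ip_sumr mulr_sumr.
  by apply: eq_bigr => j _; rewrite ipZr mulrA.
rewrite (@eq_iid_expect _ _ _ _ _ (fun s => ip d d + (2 * c * \sum_k ip (u (s k)) d +
    c ^+ 2 * \sum_k \sum_l ip (u (s k)) (u (s l))))); last first.
  move=> s; rewrite ip_sqrDZ addrA !ip_suml.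
  by congr (_ + _ * _); apply: eq_bigr => k _; rewrite ip_sumr.
have first_moment : \sum_(k < m) iid_expect P (fun s => ip (u (s k)) d) = m%:R * ip W d.
  by rewrite (eq_bigr _ (fun k _ => mean k)) sumr_const card_ord; ring.
have second_moment : \sum_(k < m) iid_expect P (fun s => \sum_l ip (u (s k)) (u (s l))) =
    m%:R * ((m%:R - 1) * ip W W + A).
  under eq_bigr => k _ do rewrite iid_expect_sum (eq_bigr _ (fun l _ => cross k l))
    big_split /= sum_indicator sumr_const card_ord.
  by rewrite sumr_const card_ord; ring.
rewrite !iid_expectD iid_expect_cst // !iid_expectMl !iid_expect_sum.
by rewrite first_moment second_moment; ring.
Qed.

End InnerProduct.

Lemma exp_progressE (R : realType) (V : lmodType R) (ip : V -> V -> R) n m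
    (P : 'I_n -> R) (g : 'I_n -> V) alpha fprev fstar :
  is_inner_product ip -> (0 < n)%N -> (0 < m)%N -> pos_distr P ->
  let gmean := n%:R^-1 *: \sum_i g i in
  exp_progress ip m P g alpha fprev fstar =
  - (2 * alpha * ip gmean (fprev - fstar) + alpha ^+ 2 * (1 - m%:R^-1) * ip gmean gmean)
  - alpha ^+ 2 / (m%:R * n%:R ^+ 2) * \sum_i ipnorm ip (g i) ^+ 2 / P i.
Proof.
move=> ip_inner n_gt0 m_gt0 [P_gt0 P_sum1] gmean.
have n_neq0 : n%:R != 0 :> R by rewrite pnatr_eq0 -lt0n.
have m_neq0 : m%:R != 0 :> R by rewrite pnatr_eq0 -lt0n.
have P_neq0 i : P i != 0 by rewrite gt_eqF.
pose u i := (n%:R * P i)^-1 *: g i.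
have mean_u : \sum_i P i *: u i = gmean.
  rewrite /gmean scaler_sumr; apply: eq_bigr => i _; rewrite scalerA.
  by congr (_ *: _); field; rewrite n_neq0 P_neq0.
have sqr_u : \sum_i P i * ip (u i) (u i) =
    n%:R ^- 2 * \sum_i ipnorm ip (g i) ^+ 2 / P i.
  rewrite mulr_sumr; apply: eq_bigr => i _.
  by rewrite /u ipZl // ipZr // ipnorm_sqr //; field; rewrite n_neq0 P_neq0.
rewrite /exp_progress ipnorm_sqr //.
rewrite (@eq_iid_expect _ _ _ _ _ (fun s => ip (fprev - fstar + (alpha / m%:R) *: \sum_k u (s k))
    (fprev - fstar + (alpha / m%:R) *: \sum_k u (s k)))); last first.
  by move=> s; rewrite ipnorm_sqr // /gbar scalerA addrAC.
rewrite iid_expect_ip_sqr // mean_u sqr_u; field; exact/andP.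
Qed.

Lemma sum_sqr_div_ge (R : realType) n (a P : 'I_n -> R) :
  pos_distr P -> (\sum_i a i) ^+ 2 <= \sum_i a i ^+ 2 / P i.
Proof.
move=> [P_gt0 P_sum1]; set S := \sum_i a i; rewrite -subr_ge0.
(* the defect is a chi-square distance between a / S and P *)
have -> : \sum_i a i ^+ 2 / P i - S ^+ 2 = \sum_i (a i - S * P i) ^+ 2 / P i.
  have term i : (a i - S * P i) ^+ 2 / P i = a i ^+ 2 / P i - 2 * S * a i + S ^+ 2 * P i.
    by field; rewrite gt_eqF.
  by rewrite (eq_bigr _ (fun i _ => term i)) big_split sumrB /= -!mulr_sumr P_sum1 -/S; ring.
by apply: sumr_ge0 => i _; rewrite divr_ge0 ?sqr_ge0 ?ltW.
Qed.

Lemma sum_sqr_div_normalize (R : realType) n (a : 'I_n -> R) :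
  (forall i, 0 < a i) -> \sum_i a i ^+ 2 / (a i / \sum_j a j) = (\sum_i a i) ^+ 2.
Proof.
move=> a_gt0; rewrite expr2 mulr_sumr; apply: eq_bigr => i _.
by rewrite invf_div; field; rewrite gt_eqF.
Qed.

Lemma pos_distr_normalize (R : realType) n (a : 'I_n -> R) :
  (0 < n)%N -> (forall i, 0 < a i) -> pos_distr (fun i => a i / \sum_j a j).
Proof.
move=> n_gt0 a_gt0; have sum_gt0 : 0 < \sum_j a j.
  by rewrite (bigD1 (Ordinal n_gt0)) //= ltr_wpDr ?sumr_ge0 // => j _; rewrite ltW.
split=> [i|]; first by rewrite divr_gt0.
by rewrite -mulr_suml mulfV // gt_eqF.
Qed.

Lemma enorm_bweight_gt0 (R : realType) M (fx : 'I_M -> R) (z : 'I_M) :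
  (1 < M)%N -> 0 < enorm (bweight fx z).
Proof.
move=> M_gt1; have [j0 j0_neq_z] : exists j0 : 'I_M, j0 != z.
  by case: z => [[|k] k_lt]; [exists (Ordinal M_gt1) | exists (Ordinal (ltnW M_gt1))].
have wz_gt0 : 0 < bweight fx z z.
  rewrite /bweight eqxx (bigD1 j0) //= ltr_wpDr ?expR_gt0 //.
  by apply: sumr_ge0 => j _; rewrite ltW ?expR_gt0.
rewrite /enorm sqrtr_gt0 (bigD1 z) //= ltr_wpDr ?exprn_gt0 //.
by apply: sumr_ge0 => j _; rewrite sqr_ge0.
Qed.

Theorem theorem1 (R : realType) (X : Type) (n M m : nat)
  (xs : 'I_n -> X) (zs : 'I_n -> 'I_M)
  (V : lmodType R) (ip : V -> V -> R) (ev : V -> X -> 'I_M -> R)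
  (fprev fstar : V) (g : 'I_n -> V) (beta alpha : R) :
  is_inner_product ip ->
  (1 < M)%N -> (0 < n)%N -> (0 < m)%N ->
  (forall h : V, risk xs zs (ev fstar) <= risk xs zs (ev h)) ->
  0 < beta ->
  (forall i, ipnorm ip (g i) = beta * enorm (bweight (ev fprev (xs i)) (zs i))) ->
  let Pstar := fun i : 'I_n =>
    enorm (bweight (ev fprev (xs i)) (zs i)) /
    \sum_(j < n) enorm (bweight (ev fprev (xs j)) (zs j)) in
  pos_distr Pstar /\
  forall P : 'I_n -> R, pos_distr P ->
    exp_progress ip m P g alpha fprev fstar <=
    exp_progress ip m Pstar g alpha fprev fstar.
Proof.
move=> ip_inner M_gt1 n_gt0 m_gt0 _ beta_gt0 g_norm Pstar.
set e := fun i => enorm (bweight (ev fprev (xs i)) (zs i)).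
have e_gt0 i : 0 < e i by apply: enorm_bweight_gt0.
have Pstar_distr : pos_distr Pstar by apply: pos_distr_normalize.
split=> // P P_distr.
have sum_g (Q : 'I_n -> R) :
    \sum_i ipnorm ip (g i) ^+ 2 / Q i = beta ^+ 2 * \sum_i e i ^+ 2 / Q i.
  by rewrite mulr_sumr; apply: eq_bigr => i _; rewrite g_norm exprMn mulrA.
have coef_ge0 : 0 <= alpha ^+ 2 / (m%:R * n%:R ^+ 2).
  by rewrite divr_ge0 ?sqr_ge0 // mulr_ge0 ?ler0n ?sqr_ge0.
rewrite !exp_progressE // lerD2l lerN2; apply: ler_wpM2l => //.
rewrite !sum_g; apply: ler_wpM2l; first exact: sqr_ge0.
by rewrite sum_sqr_div_normalize //; apply: sum_sqr_div_ge.
Qed.
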